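(* Let $M$ be a graded finitely generated faithful graded multiplication $R$-module and $U$ a proper graded submodule of $M$, and assume $J_{gr}(M)=J_{gr}(R)M$. Then $U$ is a graded weakly $J_{gr}$-semiprime submodule of $M$ if and only if $(U:_RM)$ is a graded weakly $J_{gr}$-semiprime ideal of $R$.
   Context: Standing conventions: $\Gamma$ is a group, $R=\bigoplus_{g\in\Gamma}R_g$ is a commutative $\Gamma$-graded ring with identity, and $M=\bigoplus_{g\in\Gamma}M_g$ is a unitary $\Gamma$-graded $R$-module. $h(R)$, $h(M)$ are the homogeneous elements. A submodule $U$ is graded if $U=\bigoplus_g(U\cap M_g)$. $M$ is graded finitely generated if $M=Ra_1+\dots+Ra_n$ with $a_i\in h(M)$; graded multiplication if every graded submodule equals $KM$ for some graded ideal $K$ of $R$; faithful if $\mathrm{ann}_R(M)=0$. $(U:_RM)=\{r\in R: rM\subseteq U\}$. For a graded module $N$, a graded submodule $U\neq N$ is Gr-maximal if every graded submodule between $U$ and $N$ equals $U$ or $N$; $J_{gr}(N)$ is the intersection of all Gr-maximal submodules of $N$ ($=N$ if none); $J_{gr}(R)$ is this for $N=R$. A proper graded submodule $U$ of $M$ is graded weakly $J_{gr}$-semiprime if whenever $r_g\in h(R)$, $m_h\in h(M)$, $n\in\mathbb{Z}^+$ and $0\neq r_g^nm_h\in U$, then $r_gm_h\in U+J_{gr}(M)$; a graded ideal of $R$ is graded weakly $J_{gr}$-semiprime if it is so as a submodule of the graded $R$-module $R$. *)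

From HB Require Import structures.
From mathcomp Require Import all_boot all_order all_algebra.
From Stdlib Require List.
Set Implicit Arguments. Unset Strict Implicit. Unset Printing Implicit Defensive.
Import GRing.Theory.
Local Open Scope ring_scope.

Definition is_group (G : Type) (op : G -> G -> G) (e : G) (inv : G -> G) : Prop :=
  (forall a b c, op a (op b c) = op (op a b) c) /\
  (forall a, op e a = a /\ op a e = a) /\
  (forall a, op (inv a) a = e /\ op a (inv a) = e).

Definition add_subgroup (V : zmodType) (A : V -> Prop) : Prop :=
  A 0 /\ (forall x y, A x -> A y -> A (x - y)).

(* A = (+)_{g} C g  (internal direct sum of the family C inside V) *)
Definition direct_sum_on (G : Type) (V : zmodType) (A : V -> Prop)
    (C : G -> V -> Prop) : Prop :=
  (forall x, A x <-> exists (s : seq G) (f : G -> V),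
      List.NoDup s /\ (forall g, List.In g s -> C g (f g)) /\
      x = \sum_(g <- s) f g) /\
  (forall (s : seq G) (f : G -> V), List.NoDup s ->
      (forall g, List.In g s -> C g (f g)) -> \sum_(g <- s) f g = 0 ->
      forall g, List.In g s -> f g = 0).

Definition graded_ring (G : Type) (op : G -> G -> G) (R : pzRingType)
    (Rg : G -> R -> Prop) : Prop :=
  (forall g, add_subgroup (Rg g)) /\ direct_sum_on (fun _ => True) Rg /\
  (forall g h a b, Rg g a -> Rg h b -> Rg (op g h) (a * b)).

Definition graded_module (G : Type) (op : G -> G -> G) (R : pzRingType)
    (Rg : G -> R -> Prop) (M : lmodType R) (Mg : G -> M -> Prop) : Prop :=
  (forall g, add_subgroup (Mg g)) /\ direct_sum_on (fun _ => True) Mg /\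
  (forall g h r m, Rg g r -> Mg h m -> Mg (op g h) (r *: m)).

Definition homog (G V : Type) (C : G -> V -> Prop) (x : V) : Prop :=
  exists g, C g x.

Definition submodule (R : pzRingType) (M : lmodType R) (U : M -> Prop) : Prop :=
  U 0 /\ (forall x y, U x -> U y -> U (x + y)) /\ (forall r x, U x -> U (r *: x)).

Definition graded_submodule (G : Type) (R : pzRingType) (M : lmodType R)
    (Mg : G -> M -> Prop) (U : M -> Prop) : Prop :=
  submodule U /\ direct_sum_on U (fun g x => U x /\ Mg g x).

Definition gr_proper (V : Type) (U : V -> Prop) : Prop := exists x, ~ U x.

Definition gr_maximal (G : Type) (R : pzRingType) (M : lmodType R)
    (Mg : G -> M -> Prop) (U : M -> Prop) : Prop :=
  graded_submodule Mg U /\ gr_proper U /\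
  forall V : M -> Prop, graded_submodule Mg V -> (forall x, U x -> V x) ->
    (forall x, V x <-> U x) \/ (forall x, V x).

(* J_gr(M): intersection of all Gr-maximal submodules (= M if there are none) *)
Definition Jgr (G : Type) (R : pzRingType) (M : lmodType R)
    (Mg : G -> M -> Prop) : M -> Prop :=
  fun x => forall U, gr_maximal Mg U -> U x.

Definition ideal_mul (R : pzRingType) (M : lmodType R) (K : R -> Prop) : M -> Prop :=
  fun x => exists (n : nat) (k : 'I_n -> R) (m : 'I_n -> M),
    (forall i, K (k i)) /\ x = \sum_(i < n) k i *: m i.

Definition colon (R : pzRingType) (M : lmodType R) (U : M -> Prop) : R -> Prop :=
  fun r => forall m : M, U (r *: m).

Definition gr_finitely_generated (G : Type) (R : pzRingType) (M : lmodType R)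
    (Mg : G -> M -> Prop) : Prop :=
  exists (n : nat) (a : 'I_n -> M), (forall i, homog Mg (a i)) /\
    forall x : M, exists r : 'I_n -> R, x = \sum_(i < n) r i *: a i.

Definition faithful (R : pzRingType) (M : lmodType R) : Prop :=
  forall r : R, (forall m : M, r *: m = 0) -> r = 0.

(* graded ideals of R = graded submodules of the graded R-module R (= R^o) *)
Definition gr_multiplication (G : Type) (R : pzRingType) (Rg : G -> R -> Prop)
    (M : lmodType R) (Mg : G -> M -> Prop) : Prop :=
  forall N : M -> Prop, graded_submodule Mg N ->
    exists K : R^o -> Prop, graded_submodule (M := R^o) Rg K /\
      forall x : M, N x <-> ideal_mul (M := M) (K : R -> Prop) x.

Definition gr_weakly_Jgr_semiprime (G : Type) (R : pzRingType)
    (Rg : G -> R -> Prop) (M : lmodType R) (Mg : G -> M -> Prop)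
    (U : M -> Prop) : Prop :=
  graded_submodule Mg U /\ gr_proper U /\
  forall (r : R) (m : M) (n : nat), homog Rg r -> homog Mg m -> (0 < n)%N ->
    r ^+ n *: m <> 0 -> U (r ^+ n *: m) ->
    exists u j, U u /\ Jgr Mg j /\ r *: m = u + j.

(* Let K = (U :_R M), J = J_gr(R) and L = K + J.  The theorem reduces to two
   facts about a faithful graded finitely generated graded multiplication
   module M with J_gr(M) = J M:
   - (backward) if K is graded weakly J_gr-semiprime and r^k m \in U with r, m
     homogeneous, write R m = I M for a graded ideal I; every homogeneous
     b \in I has r^k b \in K, so r b \in L (directly, or because r b is a
     homogeneous nilpotent, and such elements lie in J_gr(R)); hence
     r m \in L M \subset K M + J M \subset U + J_gr(M).
   - (forward) if U is graded weakly J_gr-semiprime and r^k s \in K, the same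
     dichotomy shows r s a_i \in L M for every homogeneous generator a_i, and
     the cancellation law of faithful finitely generated multiplication
     modules (x M \subset L M implies x \in L, proved with a partition of
     unity obtained by the determinant trick) gives r s \in L. *)

From HB Require Import structures.
From mathcomp Require Import all_boot all_order all_algebra.
From mathcomp Require Import boolp fingroup perm.
From Stdlib Require FinFun.
Set Implicit Arguments. Unset Strict Implicit. Unset Printing Implicit Defensive.
Import GRing.Theory.
Local Open Scope ring_scope.

Lemma In_mem (G : Type) (s : seq {classic G}) (x : {classic G}) :
  List.In x s <-> x \in s.
Proof.
elim: s => [|y s IH] //=; rewrite in_cons; split.
- by case=> [->|/IH ->]; rewrite ?eqxx ?orbT.
- by case/orP=> [/eqP ->|/IH]; [left|right].
Qed.

Lemma NoDup_uniq (G : Type) (s : seq {classic G}) : List.NoDup s <-> uniq s.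
Proof.
elim: s => [|y s IH] /=; first by split => // _; constructor.
split.
- move=> H; inversion H; subst; apply/andP; split; last by apply/IH.
  by apply/negP => /In_mem.
- case/andP => Hy Hs; constructor; last by apply/IH.
  by move/In_mem; rewrite (negbTE Hy).
Qed.

Lemma sum_closed (I : Type) (V : zmodType) (P : V -> Prop) :
  P 0 -> (forall x y, P x -> P y -> P (x + y)) ->
  forall (s : seq I) (Q : pred I) (f : I -> V),
  (forall i, List.In i s -> Q i -> P (f i)) -> P (\sum_(i <- s | Q i) f i).
Proof.
move=> P0 PD; elim=> [|y s IH] Q f Hf; first by rewrite big_nil.
rewrite big_cons; case: ifP => Qy; last by apply: IH => i Hi; apply: Hf; right.
by apply: PD; [apply: Hf; [left|]|apply: IH => i Hi; apply: Hf; right].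
Qed.

Lemma add_subgroupD (V : zmodType) (A : V -> Prop) :
  add_subgroup A -> forall x y, A x -> A y -> A (x + y).
Proof.
move=> [A0 AB] x y Ax Ay; rewrite -[y]opprK -[- y]sub0r.
by apply: (AB) => //; apply: (AB).
Qed.

Definition sum_set (V : zmodType) (A B : V -> Prop) : V -> Prop :=
  fun x => exists a b, A a /\ B b /\ x = a + b.

Definition cyclic (R : pzRingType) (M : lmodType R) (m : M) : M -> Prop :=
  fun x => exists r, x = r *: m.

Section Ideals.
Variable R : comPzRingType.

Record ideal (I : R -> Prop) : Prop := Ideal {
  ideal0 : I 0;
  idealD : forall x y, I x -> I y -> I (x + y);
  idealM : forall r x, I x -> I (r * x) }.

Lemma ideal_submodule (I : R -> Prop) : ideal I <-> submodule (M := R^o) I.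
Proof.
split; first by case=> I0 ID IM; split; [|split].
by case=> I0 [ID IM]; split.
Qed.

Lemma ideal_sum (I : R -> Prop) n (f : 'I_n -> R) :
  ideal I -> (forall i, I (f i)) -> I (\sum_(i < n) f i).
Proof. by case=> I0 ID _ Hf; apply: big_ind. Qed.

Lemma sum_set_ideal (K J : R -> Prop) : ideal K -> ideal J -> ideal (sum_set K J).
Proof.
move=> [K0 KD KM] [J0 JD JM]; split.
- by exists 0, 0; rewrite addr0.
- move=> x y [u1 [j1 [Ku1 [Jj1 ->]]]] [u2 [j2 [Ku2 [Jj2 ->]]]].
  by exists (u1 + u2), (j1 + j2); do !split; [exact: KD|exact: JD|rewrite addrACA].
- move=> r x [u [j [Ku [Jj ->]]]].
  by exists (r * u), (r * j); do !split; [exact: KM|exact: JM|rewrite mulrDr].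
Qed.

Lemma conductor_ideal (I : R -> Prop) (x : R) :
  ideal I -> ideal (fun y => I (x * y)).
Proof.
case=> I0 ID IM; split; first by rewrite mulr0.
- by move=> y z Iy Iz; rewrite mulrDr; apply: ID.
- by move=> r y Iy; rewrite mulrCA; apply: IM.
Qed.

Lemma ideal_powerD (Q : R -> Prop) (y z : R) p q :
  ideal Q -> Q (y ^+ p) -> Q (z ^+ q) -> Q ((y + z) ^+ (p + q)).
Proof.
move=> HQ Hy Hz; rewrite exprDn; apply: ideal_sum => // i.
rewrite -mulr_natl; apply: (idealM HQ).
case: (leqP q i) => [qi|iq].
  have -> : z ^+ i = z ^+ q * z ^+ (i - q) by rewrite -exprD subnKC.
  by rewrite mulrCA mulrC; apply: (idealM HQ).
have -> : (p + q - i = p + (q - i))%N by rewrite addnBA // ltnW.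
by rewrite exprD -mulrA mulrC; apply: (idealM HQ).
Qed.

Lemma ideal_partition_unity (Q : R -> Prop) n (c : 'I_n -> R) :
  ideal Q -> \sum_(i < n) c i = 1 -> (forall i, exists k, Q (c i ^+ k)) -> Q 1.
Proof.
move=> HQ Hc1 Hc.
have [k] : exists k, Q ((\sum_(i < n) c i) ^+ k).
  apply: (big_ind (fun z => exists k, Q (z ^+ k))).
  - by exists 1%N; rewrite expr1; apply: ideal0.
  - by move=> y z [p Hp] [q Hq]; exists (p + q)%N; exact: ideal_powerD.
  - by move=> i _; exact: Hc.
by rewrite Hc1 expr1n.
Qed.

End Ideals.

Lemma cyclic_submodule (R : comPzRingType) (M : lmodType R) (m : M) :
  submodule (cyclic m).
Proof.
split; first by exists 0; rewrite scale0r.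
split; first by move=> x y [r1 ->] [r2 ->]; exists (r1 + r2); rewrite scalerDl.
by move=> r x [r' ->]; exists (r * r'); rewrite scalerA.
Qed.

Lemma colon_ideal (R : comPzRingType) (M : lmodType R) (U : M -> Prop) :
  submodule U -> ideal (colon U).
Proof.
case=> U0 [UD UZ]; split; first by move=> m; rewrite scale0r.
- by move=> x y Hx Hy m; rewrite scalerDl; apply: UD.
- by move=> r x Hx m; rewrite -scalerA; apply: UZ.
Qed.

Section IdealProducts.
Variables (R : comPzRingType) (M : lmodType R).

Lemma ideal_mul1 (K : R -> Prop) (k : R) (m : M) : K k -> ideal_mul K (k *: m).
Proof.
move=> Kk; exists 1%N, (fun _ => k), (fun _ => m); split => //.
by rewrite big_ord1.
Qed.

Lemma ideal_mul_scale (K K' : R -> Prop) (x : R) (m : M) :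
  (forall b, K b -> K' (x * b)) -> ideal_mul K m -> ideal_mul K' (x *: m).
Proof.
move=> HK [n [k [mm [Hk ->]]]]; exists n, (fun i => x * k i), mm; split.
  by move=> i; apply: HK.
by rewrite scaler_sumr; apply: eq_bigr => i _; rewrite scalerA.
Qed.

Lemma ideal_mul_mono (K K' : R -> Prop) (m : M) :
  (forall b, K b -> K' b) -> ideal_mul K m -> ideal_mul K' m.
Proof.
move=> HK /(ideal_mul_scale (x := 1)); rewrite scale1r; apply=> b /HK.
by rewrite mul1r.
Qed.

Lemma ideal_mulD (K : R -> Prop) (x y : M) :
  ideal_mul K x -> ideal_mul K y -> ideal_mul K (x + y).
Proof.
move=> [n1 [k1 [m1 [Hk1 ->]]]] [n2 [k2 [m2 [Hk2 ->]]]].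
pose glue (T : Type) (f1 : 'I_n1 -> T) (f2 : 'I_n2 -> T) (i : 'I_(n1 + n2)) :=
  match split i with inl p => f1 p | inr q => f2 q end.
exists (n1 + n2)%N, (glue _ k1 k2), (glue _ m1 m2); split.
  by move=> i; rewrite /glue; case: split.
rewrite big_split_ord /glue; congr (_ + _); apply: eq_bigr => i _.
  by rewrite (unsplitK (inl _)).
by rewrite (unsplitK (inr _)).
Qed.

Lemma ideal_mul_sum_set (K J : R -> Prop) (x : M) :
  ideal_mul (sum_set K J) x ->
  exists u j, ideal_mul K u /\ ideal_mul J j /\ x = u + j.
Proof.
case=> n [k [mm [Hk ->]]]; case/choice: (fun i => Hk i) => u Hu.
case/choice: (fun i => Hu i) => j Hj.
exists (\sum_(i < n) u i *: mm i), (\sum_(i < n) j i *: mm i); split.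
  by exists n, u, mm; split => // i; case: (Hj i).
split; first by exists n, j, mm; split => // i; case: (Hj i) => _ [].
rewrite -big_split; apply: eq_bigr => i _.
by case: (Hj i) => _ [_ ->]; rewrite scalerDl.
Qed.

Lemma ideal_mul_colon (U : M -> Prop) (x : M) :
  submodule U -> ideal_mul (colon U) x -> U x.
Proof.
case=> U0 [UD _] [n [k [mm [Hk ->]]]].
by apply: (big_ind U) => // i _; apply: Hk.
Qed.

End IdealProducts.

Lemma colon_cyclic_mul (R : comPzRingType) (M : lmodType R) (P : M -> Prop)
    (m : M) (b y : R) :
  (forall r x, P x -> P (r *: x)) -> colon (cyclic m) b -> P (y *: m) ->
  colon P (y * b).
Proof.
move=> PZ Hb Py m'; have [d Ed] := Hb m'.
by rewrite -scalerA Ed scalerA mulrC -scalerA; apply: PZ.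
Qed.

(* det (1 - T) is congruent to 1 modulo any ideal containing the entries
   of T: every non-identity permutation picks an off-diagonal entry. *)
Lemma det_one_sub (R : comPzRingType) n (Q : R -> Prop) (T : 'M[R]_n) :
  ideal Q -> (forall j l, Q (T j l)) -> Q (\det (1%:M - T) - 1).
Proof.
move=> HQ HT; have QN : forall y, Q y -> Q (- y).
  by move=> y Hy; rewrite -mulN1r; apply: (idealM HQ).
rewrite /determinant (bigD1 (1%g : {perm 'I_n})) //= odd_perm1 expr0 mul1r addrAC.
apply: (idealD HQ).
  apply: (big_ind (fun y => Q (y - 1))); first by rewrite subrr; apply: ideal0.
    move=> x y Hx Hy.
    have -> : x * y - 1 = x * (y - 1) + (x - 1) by rewrite mulrBr mulr1 addrA subrK.
    by apply: (idealD HQ) => //; apply: (idealM HQ).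
  move=> i _; rewrite perm1 !mxE eqxx mulr1n addrAC subrr add0r; exact: QN.
apply: (big_ind Q) => [|x y|s s1]; [exact: ideal0|exact: idealD|].
have [i si] : exists i, s i != i.
  case: (pselect (exists i, s i != i)) => // Hn; exfalso.
  move/eqP: s1; apply; apply/permP => i; rewrite perm1.
  by case: (eqVneq (s i) i) => // H; case: Hn; exists i.
apply: (idealM HQ); rewrite (bigD1 i) //= mulrC; apply: (idealM HQ).
by rewrite !mxE eq_sym (negbTE si) mulr0n sub0r; apply: QN.
Qed.

(* The adjugate argument: a matrix relation A a = 0 among elements a_i of a
   module forces det A to annihilate every a_i. *)
Lemma det_annihilates (R : comPzRingType) (M : lmodType R) n (a : 'I_n -> M)
  (A : 'M[R]_n) :
  (forall j, \sum_(l < n) A j l *: a l = 0) -> forall i, \det A *: a i = 0.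
Proof.
move=> Rel i.
have -> : \det A *: a i = \sum_(l < n) ((\det A)%:M : 'M[R]_n) i l *: a l.
  rewrite (bigD1 i) //= mxE eqxx mulr1n big1 ?addr0 //.
  by move=> l li; rewrite mxE eq_sym (negbTE li) mulr0n scale0r.
rewrite -mul_adj_mx.
under eq_bigr => l _ do rewrite mxE scaler_suml.
rewrite exchange_big /= big1 // => j _.
under eq_bigr => l _ do rewrite -scalerA.
by rewrite -scaler_sumr Rel scaler0.
Qed.

Section Generators.
Variables (R : comPzRingType) (M : lmodType R) (n : nat) (a : 'I_n -> M).
Hypothesis Hspan : forall x : M, exists r : 'I_n -> R, x = \sum_(i < n) r i *: a i.
Hypothesis Hfaith : faithful M.

Lemma ideal_mul_gen (L : R -> Prop) (x : M) : ideal L -> ideal_mul L x ->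
  exists l : 'I_n -> R, (forall j, L (l j)) /\ x = \sum_(j < n) l j *: a j.
Proof.
move=> HL [N [k [mm [Hk ->]]]].
case: (choice (fun p => Hspan (mm p))) => rho Hrho.
exists (fun j => \sum_(p < N) k p * rho p j); split.
  by move=> j; apply: ideal_sum => // p; rewrite mulrC; apply: (idealM HL).
under eq_bigr => p _ do rewrite (Hrho p) scaler_sumr.
rewrite exchange_big /=; apply: eq_bigr => j _.
by rewrite scaler_suml; apply: eq_bigr => p _; rewrite scalerA.
Qed.

Lemma annihilator_generators (r : R) : (forall i, r *: a i = 0) -> r = 0.
Proof.
move=> Hr; apply: Hfaith => m; case: (Hspan m) => c ->.
by rewrite scaler_sumr big1 // => i _; rewrite scalerA mulrC -scalerA Hr scaler0.
Qed.

(* In a faithful multiplication module the conductors (R a_i :_R M) of the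
   generators sum to R (determinant trick applied to a_j \in (R a_j :_R M) M). *)
Lemma partition_of_unity :
  (forall j, exists I, ideal I /\ forall x, cyclic (a j) x <-> ideal_mul I x) ->
  exists c : 'I_n -> R, (forall i, colon (cyclic (a i)) (c i)) /\
    \sum_(i < n) c i = 1.
Proof.
move=> Hcyc.
pose theta y := exists c : 'I_n -> R,
  (forall i, colon (cyclic (a i)) (c i)) /\ y = \sum_(i < n) c i.
have Hcol i := colon_ideal (cyclic_submodule (a i)).
have Htheta : ideal theta.
  split.
  - by exists (fun _ => 0); split => [i|]; [exact: ideal0 (Hcol i)|rewrite big1].
  - move=> x y [c1 [Hc1 ->]] [c2 [Hc2 ->]]; exists (fun i => c1 i + c2 i).
    by split; [move=> i; apply: idealD (Hcol i) _ _ (Hc1 i) (Hc2 i)|rewrite big_split].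
  - move=> r y [c1 [Hc1 ->]]; exists (fun i => r * c1 i).
    by split; [move=> i; apply: idealM (Hcol i) _ _ (Hc1 i)|rewrite mulr_sumr].
have HT j : exists Tj : 'I_n -> R, (forall l, colon (cyclic (a j)) (Tj l)) /\
    a j = \sum_(l < n) Tj l *: a l.
  case: (Hcyc j) => I [HI EI].
  have [|Tj [HTj ETj]] := ideal_mul_gen HI (proj1 (EI (a j)) _).
    by exists 1; rewrite scale1r.
  by exists Tj; split => // l m; apply/EI/ideal_mul1; apply: HTj.
case: (choice HT) => T HT2; pose Tm := \matrix_(j, l) T j l.
have Hdet : \det (1%:M - Tm) = 0.
  apply: annihilator_generators; apply: det_annihilates => j.
  under eq_bigr => l _ do rewrite !mxE scalerBl.
  rewrite sumrB -(proj2 (HT2 j)) (bigD1 j) //= eqxx scale1r big1 ?addr0 ?subrr //.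
  by move=> l lj; rewrite eq_sym (negbTE lj) scale0r.
have Hentries j l : theta (Tm j l).
  rewrite mxE; exists (fun i => if i == j then T j l else 0); split.
    move=> i; case: eqP => [->|_]; [exact: (proj1 (HT2 j))|exact: ideal0 (Hcol i)].
  by rewrite (bigD1 j) //= eqxx big1 ?addr0 // => i /negbTE ->.
have := det_one_sub Htheta Hentries; rewrite Hdet sub0r.
move/(idealM Htheta (-1)); rewrite mulN1r opprK => -[c [Hc Ec]].
by exists c.
Qed.

(* Cancellation law: if x M is contained in L M then x lies in L.  With
   the partition of unity c, each c_i^2 x is shown to lie in L. *)
Lemma cancellation (c : 'I_n -> R) (L : R -> Prop) (x : R) :
  (forall i, colon (cyclic (a i)) (c i)) -> \sum_(i < n) c i = 1 -> ideal L ->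
  (forall i, ideal_mul L (x *: a i)) -> L x.
Proof.
move=> Hc Hc1 HL Hx; rewrite -[x]mulr1.
apply: (ideal_partition_unity (conductor_ideal x HL) Hc1) => i; exists 2%N.
have [l [Hl Exi]] := ideal_mul_gen HL (Hx i).
have [d Hd] := choice (fun j => Hc i (a j)).
pose lam := \sum_(j < n) l j * d j.
have Llam : L lam by apply: ideal_sum => // j; rewrite mulrC; apply: (idealM HL).
have Eci : (c i * x) *: a i = lam *: a i.
  rewrite -scalerA Exi scaler_sumr /lam scaler_suml; apply: eq_bigr => j _.
  by rewrite scalerA mulrC -!scalerA Hd.
(* By faithfulness: writing c_i m = e a_i, both sides send m to e (lam a_i). *)
have -> : x * c i ^+ 2 = lam * c i.
  apply/eqP; rewrite -subr_eq0; apply/eqP; apply: Hfaith => m.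
  have [e He] := Hc i m.
  have E1 : (x * c i ^+ 2) *: m = e *: (lam *: a i).
    by rewrite expr2 mulrA -scalerA He scalerA mulrC -scalerA [x * c i]mulrC Eci.
  have E2 : (lam * c i) *: m = e *: (lam *: a i).
    by rewrite -scalerA He scalerA mulrC -scalerA.
  by rewrite scalerBl E1 E2 subrr.
by rewrite mulrC; apply: (idealM HL).
Qed.

End Generators.

Lemma eq_big_In (I : Type) (V : zmodType) (s : seq I) (F F' : I -> V) :
  (forall i, List.In i s -> F i = F' i) -> \sum_(i <- s) F i = \sum_(i <- s) F' i.
Proof.
elim: s => [|y s IH] HF; first by rewrite !big_nil.
by rewrite !big_cons HF ?IH // => [i Hi|]; [apply: HF; right|left].
Qed.

(* A finite sum of homogeneous elements of P, degrees possibly repeated. *)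
Definition homog_sum (G : Type) (V : zmodType) (C : G -> V -> Prop)
    (P : V -> Prop) (x : V) : Prop :=
  exists s : seq (G * V), (forall p, List.In p s -> P p.2 /\ C p.1 p.2) /\
    x = \sum_(p <- s) p.2.

Section Decompositions.
Variables (G : Type) (V : zmodType) (C : G -> V -> Prop).
Hypothesis HC : forall g, add_subgroup (C g).

(* Grouping the terms of a homogeneous sum by degree yields a decomposition
   with pairwise distinct degrees, in the shape required by direct_sum_on. *)
Lemma collect_degrees (P : V -> Prop) (x : V) :
  P 0 -> (forall x y, P x -> P y -> P (x + y)) -> homog_sum C P x ->
  exists (s : seq G) (f : G -> V), List.NoDup s /\
    (forall g, List.In g s -> P (f g) /\ C g (f g)) /\ x = \sum_(g <- s) f g.
Proof.
move=> P0 PD [s [Hs ->]].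
pose w : seq {classic G} := undup (map fst s : seq {classic G}).
have uw : uniq w by apply: undup_uniq.
exists w, (fun g => \sum_(p <- s | (p.1 : {classic G}) == g) p.2).
split; first exact/NoDup_uniq.
split.
  move=> g _; case: (HC g) => C0 _; split; apply: sum_closed => //.
  - by move=> p /Hs [].
  - exact: add_subgroupD.
  - by move=> p /Hs [_ Cp] /eqP <-.
rewrite [RHS](exchange_big_dep predT) //=; apply: eq_big_In => p Hp.
rewrite (eq_bigl (pred1 (p.1 : {classic G}))) => [|g]; last by rewrite /= eq_sym.
rewrite -big_filter filter_pred1_uniq ?big_seq1 // mem_undup.
by apply/In_mem; apply: List.in_map.
Qed.

Definition ext (s : seq {classic G}) (f : G -> V) (g : {classic G}) : V :=
  if g \in s then f g else 0.

Lemma sum_ext (s w : seq {classic G}) (f : G -> V) :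
  uniq s -> uniq w -> {subset s <= w} ->
  \sum_(g <- w) ext s f g = \sum_(g <- s) f g.
Proof.
move=> us uw sw; rewrite /ext -big_mkcond -big_filter /=.
apply: perm_big; apply: uniq_perm; rewrite ?filter_uniq // => x.
by rewrite mem_filter; case: (boolP (x \in s)) => // /sw ->.
Qed.

Lemma ext_homog (s : seq G) (f : G -> V) :
  (forall g, List.In g s -> C g (f g)) -> forall g, C g (ext s f g).
Proof.
move=> Hf g; rewrite /ext; case: ifP => [/In_mem|_]; first exact: Hf.
by case: (HC g).
Qed.

Lemma decomposition_unique (A : V -> Prop) (s t : seq G) (f u : G -> V) :
  direct_sum_on A C -> List.NoDup s -> List.NoDup t ->
  (forall g, List.In g s -> C g (f g)) -> (forall g, List.In g t -> C g (u g)) ->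
  \sum_(g <- s) f g = \sum_(g <- t) u g ->
  forall g, List.In g s -> f g = 0 \/ (List.In g t /\ f g = u g).
Proof.
move=> [_ Dindep] /NoDup_uniq us /NoDup_uniq ut Cf Cu E g gs.
pose w := undup ((s : seq {classic G}) ++ (t : seq {classic G})).
have uw : uniq w by apply: undup_uniq.
pose h k := ext s f k - ext t u k.
have Ch k : List.In k w -> C k (h k).
  by move=> _; case: (HC k) => _; apply; apply: ext_homog.
have Sh : \sum_(g <- w) h g = 0.
  rewrite sumrB !sum_ext // ?E ?subrr // => x xs;
  by rewrite mem_undup mem_cat xs ?orbT.
have gw : List.In g w by apply/In_mem; rewrite mem_undup mem_cat (proj1 (In_mem _ _) gs).
move/eqP: (Dindep w h (proj2 (NoDup_uniq w) uw) Ch Sh g gw).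
rewrite /h /ext (proj1 (In_mem _ _) gs) subr_eq0; case: ifP => [/In_mem gt|_] /eqP ->.
  by right.
by left.
Qed.

End Decompositions.

Section GradedSubmodules.
Variables (G : Type) (op : G -> G -> G) (R : comPzRingType) (Rg : G -> R -> Prop).
Variables (M : lmodType R) (Mg : G -> M -> Prop).
Hypothesis HR : graded_ring op Rg.
Hypothesis HM : graded_module op Rg Mg.

Lemma graded_submoduleP (A : M -> Prop) :
  submodule A -> (forall x, A x -> homog_sum Mg A x) -> graded_submodule Mg A.
Proof.
case: HM => HMs [[_ DMindep] _] HA Hsum; split => //; split.
  move=> x; split; first by move=> /Hsum; case: HA => A0 [AD _]; apply: collect_degrees.
  case: HA => A0 [AD _] [s [f [_ [Hf ->]]]].
  by apply: sum_closed => // g /Hf [].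
by move=> s f ns Hf; apply: DMindep => // g /Hf [].
Qed.

Lemma graded_component (U : M -> Prop) (s : seq G) (f : G -> M) :
  graded_submodule Mg U -> List.NoDup s -> (forall g, List.In g s -> Mg g (f g)) ->
  U (\sum_(g <- s) f g) -> forall g, List.In g s -> U (f g).
Proof.
case: HM => HMs [DM _] [[U0 _] [DU _]] ns Hf /(proj1 (DU _)) [t [u [nt [Hu Eu]]]] g gs.
have [->|[gt ->]] := decomposition_unique HMs DM ns nt Hf (fun g gt => proj2 (Hu g gt)) Eu gs.
  exact: U0.
by case: (Hu g gt).
Qed.

Lemma homog_sum_seq (P : M -> Prop) (s : seq G) (f : G -> M) :
  (forall g, List.In g s -> P (f g) /\ Mg g (f g)) -> homog_sum Mg P (\sum_(g <- s) f g).
Proof.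
move=> Hf; exists (map (fun g => (g, f g)) s); split; last by rewrite big_map.
by move=> p /List.in_map_iff [g [<- /Hf]].
Qed.

Lemma cyclic_graded (h : G) (m : M) : Mg h m -> graded_submodule Mg (cyclic m).
Proof.
case: HR => _ [[DR _] _]; case: HM => _ [_ HMm] Hm.
apply: graded_submoduleP; first exact: cyclic_submodule.
move=> _ [r ->]; have [s [f [_ [Hf ->]]]] := proj1 (DR r) I.
exists (map (fun g => (op g h, f g *: m)) s); split; last by rewrite big_map scaler_suml.
move=> p /List.in_map_iff [g [<- /Hf Rf]]; split; first by exists (f g).
exact: HMm.
Qed.

Lemma sum_set_graded (A B : M -> Prop) :
  graded_submodule Mg A -> graded_submodule Mg B -> graded_submodule Mg (sum_set A B).
Proof.
move=> [[A0 [AD AZ]] [DA _]] [[B0 [BD BZ]] [DB _]].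
apply: graded_submoduleP.
  split; first by exists 0, 0; rewrite addr0.
  split.
    move=> x y [a1 [b1 [Ha1 [Hb1 ->]]]] [a2 [b2 [Ha2 [Hb2 ->]]]].
    by exists (a1 + a2), (b1 + b2); rewrite addrACA; do !split; [apply: AD|apply: BD].
  move=> r x [a [b [Ha [Hb ->]]]].
  by exists (r *: a), (r *: b); rewrite scalerDr; do !split; [apply: AZ|apply: BZ].
move=> _ [a [b [Ha [Hb ->]]]].
have [s [f [_ [Hf ->]]]] := proj1 (DA a) Ha; have [t [u [_ [Hu ->]]]] := proj1 (DB b) Hb.
have [sa [Hsa ->]] : homog_sum Mg (sum_set A B) (\sum_(g <- s) f g).
  apply: homog_sum_seq => g /Hf [Af Mf]; split => //.
  by exists (f g), 0; rewrite addr0.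
have [sb [Hsb ->]] : homog_sum Mg (sum_set A B) (\sum_(g <- t) u g).
  apply: homog_sum_seq => g /Hu [Bu Mu]; split => //.
  by exists 0, (u g); rewrite add0r.
exists (sa ++ sb); split; last by rewrite big_cat.
by move=> p Hp; case: (List.in_app_or _ _ _ Hp) => [/Hsa|/Hsb].
Qed.

(* For a graded submodule U, the colon ideal (U :_R M) is graded: the
   components r_g of r satisfy r_g m \in U for homogeneous m, as the r_g m
   are the components of r m \in U (right translation in G is injective). *)
Lemma colon_graded (e : G) (inv : G -> G) (U : M -> Prop) :
  is_group op e inv -> graded_submodule Mg U -> graded_submodule (M := R^o) Rg (colon U).
Proof.
move=> [Gassoc [Gid Ginv]] HU.
have [[DR1 DR2] HRm] := proj2 HR; case: HM => _ [[DM1 _] HMm].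
have [[U0 [UD _]] _] := HU.
have Hsub : submodule (M := R^o) (colon U) by apply/ideal_submodule/colon_ideal; case: HU.
split => //; split; last by move=> s f ns Hf; apply: DR2 => // g /Hf [].
move=> x; split; last first.
  case=> s [f [_ [Hf ->]]]; case: Hsub => K0 [KD _].
  by apply: sum_closed => // g /Hf [].
move=> Kx; have [s [f [ns [Hf Ex]]]] := proj1 (DR1 x) I.
exists s, f; split => //; split => // g gs; split; last exact: Hf.
move=> m; have [t [mm [_ [Hmm ->]]]] := proj1 (DM1 m) I.
rewrite scaler_sumr; apply: sum_closed => // h /Hmm Mh _.
pose shift g := op g h.
have shift_inj : FinFun.Injective shift.
  move=> g1 g2 E; have := f_equal (fun k => op k (inv h)) E.
  rewrite /shift -!Gassoc; case: (Ginv h) => _ ->.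
  by case: (Gid g1) => _ ->; case: (Gid g2) => _ ->.
pose fm k := f (op k (inv h)) *: mm h.
have fm_shift g' : fm (shift g') = f g' *: mm h.
  by rewrite /fm /shift -Gassoc; case: (Ginv h) => _ ->; case: (Gid g') => _ ->.
have := graded_component (s := map shift s) (f := fm) HU.
rewrite -fm_shift; apply.
- exact: FinFun.Injective_map_NoDup.
- by move=> k /List.in_map_iff [g' [<- /Hf Rf]]; rewrite fm_shift; apply: HMm.
- by rewrite big_map (eq_bigr _ (fun g' _ => fm_shift g')) -scaler_suml -Ex; apply: Kx.
- exact: List.in_map.
Qed.

End GradedSubmodules.

Section GradedRing.
Variables (G : Type) (op : G -> G -> G) (R : comPzRingType) (Rg : G -> R -> Prop).
Hypothesis HR : graded_ring op Rg.

Lemma graded_ring_module : graded_module op Rg (M := R^o) Rg.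
Proof. exact: HR. Qed.

Lemma graded_ideal_ind (I P : R -> Prop) :
  graded_submodule (M := R^o) Rg I -> ideal P ->
  (forall g b, I b -> Rg g b -> P b) -> forall b, I b -> P b.
Proof.
move=> [_ [DI _]] HP Hhom b /(proj1 (DI b)) [s [f [_ [Hf ->]]]].
apply: sum_closed => [||g /Hf [If Rf] _]; [exact: ideal0 HP|exact: idealD HP|].
exact: Hhom If Rf.
Qed.

Lemma Jgr_ideal : ideal (Jgr (M := R^o) Rg : R -> Prop).
Proof.
split.
- by move=> P [[[P0 _] _] _].
- move=> x y Jx Jy P HP; case: (HP) => [[[_ [PD _]] _] _].
  by apply: PD; [exact: Jx|exact: Jy].
- by move=> r x Jx P HP; case: (HP) => [[[_ [_ PZ]] _] _]; exact: (PZ r x (Jx P HP)).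
Qed.

Lemma gr_maximal_one (P : R -> Prop) : gr_maximal (M := R^o) Rg P -> ~ P 1.
Proof.
move=> [[[_ [_ PZ]] _] [[z nPz] _]] P1; apply: nPz.
by rewrite -[z]mulr1; apply: (PZ z 1).
Qed.

(* Homogeneous nilpotent elements lie in J_gr(R): if x were outside a
   Gr-maximal P, then P + R x = R, so 1 = p + c x with c x nilpotent, making
   p a unit of P. *)
Lemma nilpotent_Jgr (g : G) (x : R) k :
  Rg g x -> x ^+ k = 0 -> Jgr (M := R^o) Rg x.
Proof.
move=> Hx Hk P HP; case: (pselect (P x)) => // nPx; exfalso.
have [[Psub Pgr] [_ Pmax]] := HP.
have Vgr : graded_submodule (M := R^o) Rg (sum_set P (cyclic (M := R^o) x)).
  apply: (sum_set_graded graded_ring_module) => //.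
  exact: (cyclic_graded HR graded_ring_module Hx).
case: (Pmax _ Vgr) => [y Py|EV|AV].
- by exists y, 0; split; [|split; [exists 0; rewrite scale0r|rewrite addr0]].
- apply: nPx; apply/EV; exists 0, x.
  by split; [exact: (proj1 Psub)|split; [exists 1; rewrite scale1r|rewrite add0r]].
- case: (AV 1) => p [_ [Pp [[c ->] Ep]]].
  apply: (gr_maximal_one HP).
  have -> : (1 : R) = (\sum_(i < k) (c * x) ^+ i) * p.
    have -> : p = - (c * x - 1) by rewrite Ep opprB addrK.
    by rewrite mulrN mulrC -subrX1 exprMn Hk mulr0 sub0r opprK.
  by case: Psub => _ [_ PZ]; apply: PZ.
Qed.

Lemma annihilated_product_Jgr (g h : G) (x b : R) k :
  Rg g x -> Rg h b -> (0 < k)%N -> x ^+ k * b = 0 -> Jgr (M := R^o) Rg (x * b).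
Proof.
case: HR => _ [_ HRm] Hx Hb; case: k => // k _ Hxk.
apply: (nilpotent_Jgr (HRm _ _ _ _ Hx Hb) (k := k.+1)).
by rewrite exprMn [b ^+ k.+1]exprS mulrA Hxk mul0r.
Qed.

End GradedRing.

Section WeaklySemiprime.
Variables (G : Type) (op : G -> G -> G) (e : G) (inv : G -> G).
Variables (R : comPzRingType) (Rg : G -> R -> Prop) (M : lmodType R) (Mg : G -> M -> Prop).
Hypothesis HG : is_group op e inv.
Hypothesis HR : graded_ring op Rg.
Hypothesis HM : graded_module op Rg Mg.
Hypothesis Hfaith : faithful M.
Hypothesis Hmult : gr_multiplication Rg Mg.
Variable U : M -> Prop.
Hypothesis HU : graded_submodule Mg U.
Hypothesis HJ : forall x : M, Jgr Mg x <-> ideal_mul (Jgr (M := R^o) Rg : R -> Prop) x.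

Local Notation J := (Jgr (M := R^o) Rg : R -> Prop).
Local Notation K := (colon U).
Local Notation L := (sum_set K J).

Lemma L_ideal : ideal L.
Proof. by apply: sum_set_ideal; [apply: colon_ideal; case: HU|exact: Jgr_ideal]. Qed.

Lemma cyclic_ideal_mul (m : M) : homog Mg m ->
  exists I : R -> Prop, graded_submodule (M := R^o) Rg I /\
    (forall x, cyclic m x <-> ideal_mul I x) /\ ideal_mul I m /\
    forall b, I b -> colon (cyclic m) b.
Proof.
case=> h Hm; have [I [HI EI]] := Hmult (cyclic_graded HR HM Hm).
exists I; do !split => //.
- by apply/EI; exists 1; rewrite scale1r.
- by move=> b Ib m'; apply/EI/ideal_mul1.
Qed.

Lemma L_of_J (x : R) : J x -> L x.
Proof.
move=> Jx; exists 0, x; split; last by rewrite add0r.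
by move=> m; rewrite scale0r; case: HU => [[]].
Qed.

Lemma L_of_K (x : R) : K x -> L x.
Proof. by move=> Kx; exists x, 0; split; [|split; [move=> P [[[]]]|rewrite addr0]]. Qed.

(* When r^k (s m) = 0, the
   elements r s b (b homogeneous in the ideal I with R m = I M) are
   nilpotent; otherwise U's property applies to s m. *)
Lemma forward_step (r s : R) (m : M) k gr gs :
  gr_weakly_Jgr_semiprime Rg Mg U -> Rg gr r -> Rg gs s -> homog Mg m ->
  (0 < k)%N -> K (r ^+ k * s) -> ideal_mul L ((r * s) *: m).
Proof.
move=> [_ [_ WU]] Hr Hs [h Hm] kpos HK.
have [_ [_ HRm]] := HR; have [_ [_ HMm]] := HM.
case: (pselect (r ^+ k *: (s *: m) = 0)) => [Z|NZ].
  have [I [HIgr [_ [Im HIm]]]] := cyclic_ideal_mul (ex_intro _ h Hm).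
  apply: ideal_mul_scale Im => x Ix; apply: L_of_J.
  apply: (graded_ideal_ind HIgr (conductor_ideal (r * s) (Jgr_ideal Rg)) _ Ix) => g b Ib Rb.
  rewrite -mulrA; apply: (annihilated_product_Jgr HR Hr (HRm _ _ _ _ Hs Rb) kpos).
  rewrite mulrA; apply: Hfaith => m'.
  apply: (colon_cyclic_mul (P := fun x => x = 0)) (HIm b Ib) _ m'.
    by move=> c y ->; rewrite scaler0.
  by rewrite -scalerA.
have Hsm : homog Mg (s *: m) by exists (op gs h); apply: HMm.
have [|u [j [Uu [Jj Euj]]]] := WU r (s *: m) k (ex_intro _ gr Hr) Hsm kpos NZ.
  by rewrite scalerA; apply: HK.
have [K' [_ EK']] := Hmult HU.
rewrite -scalerA Euj; apply: ideal_mulD.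
  apply: ideal_mul_mono (proj1 (EK' u) Uu) => y K'y; apply: L_of_K => m'.
  by apply/EK'/ideal_mul1.
exact: ideal_mul_mono L_of_J (proj1 (HJ j) Jj).
Qed.

(* Writing
   R m = I M, each homogeneous b \in I satisfies r^k b \in (U :_R M), so
   r b \in K + J, either by nilpotency or by the property of (U :_R M). *)
Lemma backward_step (r : R) (m : M) k gr :
  gr_weakly_Jgr_semiprime (M := R^o) Rg Rg K -> Rg gr r -> homog Mg m ->
  (0 < k)%N -> U (r ^+ k *: m) -> ideal_mul L (r *: m).
Proof.
move=> [_ [_ WK]] Hr Hm kpos Hrm.
have [I [HIgr [_ [Im HIm]]]] := cyclic_ideal_mul Hm.
apply: ideal_mul_scale Im => x Ix.
apply: (graded_ideal_ind HIgr (conductor_ideal r L_ideal) _ Ix) => g b Ib Rb.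
have Kb : K (r ^+ k * b).
  by apply: colon_cyclic_mul (HIm b Ib) Hrm; case: HU => [[_ [_ UZ]] _].
case: (pselect (r ^+ k * b = 0)) => [Z|NZ].
  by apply: L_of_J; exact: (annihilated_product_Jgr HR Hr Rb kpos Z).
have [u [j [Ku [Jj E]]]] := WK r b k (ex_intro _ gr Hr) (ex_intro _ g Rb) kpos NZ Kb.
by exists u, j.
Qed.

(* U semiprime => (U :_R M) semiprime, by cancellation of the finitely
   generated faithful multiplication module M. *)
Lemma colon_semiprime_of_semiprime :
  gr_finitely_generated Mg -> gr_proper U ->
  gr_weakly_Jgr_semiprime Rg Mg U -> gr_weakly_Jgr_semiprime (M := R^o) Rg Rg K.
Proof.
move=> [n [a [Ha Hspan]]] [z nUz] HWU; split; first exact: (colon_graded HR HM HG HU).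
split; first by exists 1 => K1; apply: nUz; rewrite -[z]scale1r; apply: K1.
move=> r s k [gr Hr] [gs Hs] kpos _ HK.
have Hcyc j : exists I, ideal I /\ forall x, cyclic (a j) x <-> ideal_mul I x.
  have [I [[HI _] [EI _]]] := cyclic_ideal_mul (Ha j).
  by exists I; split => //; apply/ideal_submodule.
have [c [Hc Hc1]] := partition_of_unity Hspan Hfaith Hcyc.
have [u [j [Ku [Jj E]]]] := cancellation Hspan Hfaith Hc Hc1 L_ideal
  (fun i => forward_step HWU Hr Hs (Ha i) kpos HK).
by exists u, j.
Qed.

(* (U :_R M) semiprime => U semiprime, using K M \subset U and J M = J_gr(M). *)
Lemma semiprime_of_colon_semiprime :
  gr_proper U -> gr_weakly_Jgr_semiprime (M := R^o) Rg Rg K ->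
  gr_weakly_Jgr_semiprime Rg Mg U.
Proof.
move=> HUp HWK; split => //; split => // r m k [gr Hr] Hm kpos _ Hrm.
have [u [j [Ku [Jj ->]]]] := ideal_mul_sum_set (backward_step HWK Hr Hm kpos Hrm).
exists u, j; split; first by apply: ideal_mul_colon Ku; case: HU.
by split => //; apply/HJ.
Qed.

End WeaklySemiprime.

Theorem theorem2p20 (G : Type) (op : G -> G -> G) (e : G) (inv : G -> G)
  (HG : is_group op e inv)
  (R : comPzRingType) (Rg : G -> R -> Prop) (HR : graded_ring op Rg)
  (M : lmodType R) (Mg : G -> M -> Prop) (HM : graded_module op Rg Mg)
  (Hfg : gr_finitely_generated Mg) (Hfaith : faithful M)
  (Hmult : gr_multiplication Rg Mg)
  (U : M -> Prop) (HU : graded_submodule Mg U) (HUp : gr_proper U)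
  (HJ : forall x : M, Jgr Mg x <-> ideal_mul (M := M) (Jgr (M := R^o) Rg : R -> Prop) x) :
  gr_weakly_Jgr_semiprime Rg Mg U <->
  gr_weakly_Jgr_semiprime (M := R^o) Rg Rg (colon U).
Proof.
split.
- exact: (colon_semiprime_of_semiprime HG HR HM Hfaith Hmult HU HJ Hfg HUp).
- exact: (semiprime_of_colon_semiprime HR HM Hmult HU HJ HUp).
Qed.
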